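(* Let $P(z)=a_1z+a_2z^2+\cdots+a_nz^n$ be a polynomial of degree $n\ge 2$ with positive coefficients, so that $P(0)=0$, and suppose $P'(0)>1$. Then the Julia set $\mathcal{J}(P)$ is symmetric with respect to the real line, contains the point $0$, and does not intersect the positive real line $(0,\infty)$.
   Context: For a polynomial $P$ of degree at least two, the filled Julia set is $K(P)=\{z\in\mathbb{C}: (P^n(z))_{n>0}\text{ is bounded}\}$ and the Julia set $\mathcal{J}(P)$ is the boundary of $K(P)$. *)

From HB Require Import structures.
From mathcomp Require Import all_boot all_order all_algebra complex.
From mathcomp Require Import all_classical all_reals all_analysis.
Set Implicit Arguments. Unset Strict Implicit. Unset Printing Implicit Defensive.
Import Order.TTheory GRing.Theory Num.Theory.
Import numFieldNormedType.Exports.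
Local Open Scope ring_scope.
Local Open Scope complex_scope.
Local Open Scope classical_set_scope.

(* The complex numbers over a real type R, seen as a numClosedFieldType so that
   MathComp-Analysis equips it with its usual (norm) topology. *)
Definition CC (R : realType) : numClosedFieldType := R[i].

Definition boundary (T : topologicalType) (A : set T) : set T :=
  closure A `\` A°.

Definition filled_julia (R : realType) (P : {poly CC R}) : set (CC R) :=
  [set z | exists M : R, forall n : nat,
      `|iter n (fun w => P.[w]) z| <= M%:C].

Definition julia (R : realType) (P : {poly CC R}) : set (CC R) :=
  boundary (filled_julia P).

From HB Require Import structures.
From mathcomp Require Import all_boot all_order all_algebra complex.
From mathcomp Require Import all_classical all_reals all_analysis.
Import Order.TTheory GRing.Theory Num.Theory.
Import numFieldNormedType.Exports.
Local Open Scope ring_scope.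
Local Open Scope complex_scope.
Local Open Scope classical_set_scope.

(* P has real coefficients, so it commutes with complex conjugation; hence
   K(P) is symmetric, and so is its boundary since conjugation is a
   homeomorphism.  Since deg P >= 2 there is an escape radius r with
   |P w| >= 2|w| whenever |w| >= r, so K(P) is the set of points whose whole
   orbit stays in the closed disc of radius r: K(P) is closed and J(P) lies
   in K(P).  For x > 0 the positive coefficients give P x >= P'(0) x, so the
   orbit of x grows geometrically and escapes: (0, oo) misses K(P), hence
   J(P).  Finally 0 is a fixed point, so it lies in K(P), and it is a limit
   of escaping positive reals, so it is not interior to K(P). *)

Lemma bernoulli_ineq {F : numDomainType} (n : nat) [x : F] :
  0 <= x -> 1 + x *+ n <= (1 + x) ^+ n.
Proof.
move=> x_ge0; elim: n => [|n IHn]; first by rewrite mulr0n addr0 expr0.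
have x1_ge0 : 0 <= 1 + x by rewrite addr_ge0.
rewrite exprS (le_trans _ (ler_wpM2l x1_ge0 IHn)) // mulrDr mulr1 mulrDl mul1r.
by rewrite mulrSr addrA addrAC -!addrA !lerD2l lerDl mulr_ge0 // mulrn_wge0.
Qed.

Lemma geometric_unbounded {F : archiRealFieldType} (M : F) [c q : F] :
  0 < c -> 1 < q -> exists n : nat, M < c * q ^+ n.
Proof.
move=> c_gt0 q_gt1; have d_gt0 : 0 < c * (q - 1) by rewrite mulr_gt0 ?subr_gt0.
have bound_ge0 : 0 <= `|M| / (c * (q - 1)) by rewrite divr_ge0 // ltW.
have := archi_boundP bound_ge0; set n := Num.Def.archi_bound _.
rewrite ltr_pdivrMr // => M_lt; exists n.
apply: le_lt_trans (ler_norm M) (lt_le_trans M_lt _).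
have q1_ge0 : 0 <= q - 1 by rewrite subr_ge0 ltW.
have := bernoulli_ineq n q1_ge0; rewrite subrKC => bern.
by rewrite mulrCA ler_pM2l // (le_trans _ bern) // mulr_natl lerDr.
Qed.

Lemma geometric_unbounded_complex {R : realType} [M c q : CC R] :
  M \is Num.real -> 0 < c -> 1 < q -> exists n : nat, M < c * q ^+ n.
Proof.
move=> /complex_realP[m ->] c_gt0 q_gt1.
have [c' c_def] : exists c', c = c'%:C by apply/complex_realP/gtr0_real.
have [q' q_def] : exists q', q = q'%:C.
  by apply/complex_realP/gtr0_real/(lt_trans ltr01 q_gt1).
move: c_gt0 q_gt1; rewrite c_def q_def -[0]/(0%:C) -[1]/(1%:C) !ltcR.
move=> c_gt0 q_gt1; have [n ?] := geometric_unbounded m c_gt0 q_gt1.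
by exists n; rewrite -rmorphXn -rmorphM ltcR.
Qed.

Lemma normr_horner_ge {F : numFieldType} (p : {poly F}) (w : F) :
  (1 < size p)%N -> 1 <= `|w| ->
  (`|lead_coef p| * `|w| - \sum_(i < (size p).-1) `|p`_i|)
    * `|w| ^+ (size p).-2 <= `|p.[w]|.
Proof.
move=> size_p_gt1 w_ge1; set d := (size p).-1; set S := \sum_(i < d) _.
have size_p : size p = d.+1 by rewrite prednK // ltnW.
have d_gt0 : (0 < d)%N by rewrite -ltnS -size_p.
have w_ge0 : 0 <= `|w| := le_trans ler01 w_ge1.
have low_terms : `|\sum_(i < d) p`_i * w ^+ i| <= S * `|w| ^+ d.-1.
  rewrite (le_trans (ler_norm_sum _ _ _)) // mulr_suml ler_sum // => i _.
  rewrite normrM normrX ler_wpM2l // ler_weXn2l //.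
  by rewrite -ltnS prednK.
rewrite (horner_coef_wide _ (eq_leq size_p)) big_ord_recr /= -lead_coefE -/d.
rewrite addrC (le_trans _ (lerB_normD _ _)) // normrM normrX mulrBl -mulrA.
by rewrite -exprS prednK // lerB.
Qed.

Lemma escape_radius {F : numFieldType} [p : {poly F}] : (2 < size p)%N ->
  exists2 r : F, 0 < r & forall w, r <= `|w| -> 2 * `|w| <= `|p.[w]|.
Proof.
move=> size_p_gt2; pose a : F := `|lead_coef p|.
pose S : F := \sum_(i < (size p).-1) `|p`_i|.
have a_gt0 : 0 < a.
  rewrite normr_gt0 lead_coef_eq0 -size_poly_eq0 -lt0n.
  exact: ltn_trans size_p_gt2.
have S_ge0 : 0 <= S by rewrite sumr_ge0.
have quot_ge0 : 0 <= (S + 2) / a by rewrite divr_ge0 ?addr_ge0 // ltW.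
exists (1 + (S + 2) / a) => [|w r_le_w]; first by rewrite ltr_pwDl.
have w_ge1 : 1 <= `|w| by rewrite (le_trans _ r_le_w) // lerDl.
have lead_dominates : 2 <= a * `|w| - S.
  rewrite lerBrDr (le_trans _ (ler_wpM2l (ltW a_gt0) r_le_w)) //.
  by rewrite mulrDr mulr1 mulrCA divff ?gt_eqF // mulr1 addrC lerDr ltW.
apply: le_trans (normr_horner_ge _ _ (ltnW size_p_gt2) w_ge1); rewrite -/a -/S.
have wd_ge0 : 0 <= `|w| ^+ (size p).-2 by rewrite exprn_ge0 // (le_trans ler01).
rewrite (le_trans _ (ler_wpM2r wd_ge0 lead_dominates)) //.
by rewrite ler_wpM2l // ler_eXnr // -subn2 subn_gt0.
Qed.

Lemma horner_ge_coef1 {F : numDomainType} [p : {poly F}] [x : F] :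
  (forall i, 0 <= p`_i) -> 0 <= x -> p`_1 * x <= p.[x].
Proof.
move=> coef_ge0 x_ge0.
have one_lt : (1 < maxn (size p) 2)%N by rewrite leq_max orbT.
rewrite (horner_coef_wide x (leq_maxl (size p) 2)) (bigD1 (Ordinal one_lt)) //=.
by rewrite expr1 lerDl sumr_ge0 // => i _; rewrite mulr_ge0 ?exprn_ge0.
Qed.

Lemma iter_escape {F : numDomainType} [f : F -> F] [r : F] :
  (forall w, r <= `|w| -> 2 * `|w| <= `|f w|) ->
  forall k w, r <= `|w| -> 2 ^+ k * `|w| <= `|iter k f w|.
Proof.
move=> f_esc; elim=> [|k IHk] w r_le_w; first by rewrite mul1r.
have w_le_fw : `|w| <= `|f w|.
  by rewrite (le_trans _ (f_esc _ r_le_w)) // ler_peMl // ler1n.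
rewrite iterSr exprSr -mulrA (le_trans _ (IHk _ (le_trans r_le_w w_le_fw))) //.
by rewrite ler_wpM2l ?exprn_ge0 ?f_esc.
Qed.

Lemma iter_ge_expr {F : numDomainType} [f : F -> F] [a : F] :
  0 < a -> (forall y, 0 < y -> a * y <= f y) ->
  forall m x, 0 < x -> a ^+ m * x <= iter m f x.
Proof.
move=> a_gt0 f_ge; elim=> [|m IHm] x x_gt0; first by rewrite mul1r.
have fx_gt0 : 0 < f x by rewrite (lt_le_trans _ (f_ge _ x_gt0)) ?mulr_gt0.
rewrite iterSr exprSr -mulrA (le_trans _ (IHm _ fx_gt0)) //.
by rewrite ler_wpM2l ?f_ge // exprn_ge0 // ltW.
Qed.

Lemma horner_conjc {R : rcfType} (p : {poly R[i]}) (z : R[i]) :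
  (forall i, p`_i \is Num.real) -> p.[z^*] = p.[z]^*.
Proof.
move=> p_real; rewrite !horner_coef rmorph_sum; apply: eq_bigr => i _.
have /complex_realP[a ->] := p_real i.
by rewrite rmorphM rmorphXn /= oppr0.
Qed.

Lemma iter_horner_conjc {R : rcfType} (p : {poly R[i]}) (n : nat) (z : R[i]) :
  (forall i, p`_i \is Num.real) ->
  iter n (horner p) z^* = (iter n (horner p) z)^*.
Proof. by move=> p_real; elim: n => //= n ->; rewrite horner_conjc. Qed.

Lemma continuous_horner_num {F : numFieldType} (p : {poly F}) :
  continuous (horner p).
Proof.
elim/poly_ind: p => [|p c IHp] z.
  have -> : horner (0 : {poly F}) = cst 0 by apply/funext => w; rewrite horner0.
  exact: cst_continuous.
have -> : horner (p * 'X + c%:P) = horner p \* id + cst c.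
  by apply/funext => w; rewrite hornerMXaddC.
apply: continuousD; last exact: cst_continuous.
by apply: continuousM; [exact: IHp | exact: cvg_id].
Qed.

Lemma continuous_iter {T : topologicalType} (f : T -> T) (n : nat) :
  continuous f -> continuous (iter n f).
Proof.
move=> f_cont; elim: n => [|n IHn] z /=; first exact: cvg_id.
exact: (continuous_comp (IHn z) (f_cont _)).
Qed.

Lemma closed_normr_le {F : numFieldType} (r : F) :
  r \is Num.real -> closed [set w : F | `|w| <= r].
Proof.
move=> r_real; rewrite -openC openE => z /= /negP; rewrite -real_ltNge //.
move=> r_lt_z; apply/nbhs_ballP.
exists (`|z| - r) => /=; first by rewrite subr_gt0.
move=> w; rewrite -ball_normE /= => zw; apply/negP; rewrite -real_ltNge //.
have := lerB_dist z (z - w); rewrite subKr; apply: lt_le_trans.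
by rewrite ltrBrDl -ltrBrDr.
Qed.

Lemma continuous_conjc {R : realType} : continuous (@conjc R : CC R -> CC R).
Proof.
move=> z B /nbhs_ballP[e e_gt0 zeB]; apply/nbhs_ballP; exists e => // w zew.
by apply: zeB; move: zew; rewrite -!ball_normE /= -rmorphB normcJ.
Qed.

Lemma boundary_involutive {T : topologicalType} (g : T -> T) (A : set T) :
  continuous g -> involutive g -> (forall x, A (g x) <-> A x) ->
  forall x, boundary A (g x) <-> boundary A x.
Proof.
move=> g_cont gK gA.
suff imp x : boundary A (g x) -> boundary A x.
  by move=> x; split=> [|?]; [exact: imp | apply: imp; rewrite gK].
have nbhs_g B : nbhs x B -> nbhs (g x) (g @^-1` B).
  by move=> Bx; apply: g_cont; rewrite gK.
move=> [cl_gx not_int_gx]; split.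
  move=> B /nbhs_g /cl_gx [y [Ay By]]; exists (g y); split => //; exact/gA.
by move=> /nbhs_g A_gx; apply: not_int_gx; apply: filterS A_gx => y /gA.
Qed.

Section FilledJulia.
Context {R : realType} {P : {poly CC R}}.
Hypothesis size_P : (2 < size P)%N.

Lemma filled_juliaE [r : CC R] :
  0 < r -> (forall w, r <= `|w| -> 2 * `|w| <= `|P.[w]|) ->
  filled_julia P = [set z | forall m, `|iter m (horner P) z| <= r].
Proof.
move=> r_gt0 P_esc; apply/seteqP; split=> z /=; last first.
  by move=> z_bdd; exists (complex.Re r) => m; rewrite RRe_real ?gtr0_real.
move=> [M z_bdd] m; rewrite real_leNgt ?normr_real ?gtr0_real //.
apply/negP => r_lt_w; set w := iter m _ _ in r_lt_w.
have M_real : M%:C \is Num.real by apply/complex_realP; exists M.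
have [k M_lt] :=
  geometric_unbounded_complex M_real (lt_trans r_gt0 r_lt_w) (ltr1n _ 2).
have := iter_escape P_esc k _ (ltW r_lt_w); rewrite -iterD mulrC => w_le.
by have := lt_le_trans M_lt (le_trans w_le (z_bdd _)); rewrite ltxx.
Qed.

Lemma closed_filled_julia : closed (filled_julia P).
Proof.
have [r r_gt0 P_esc] := escape_radius size_P.
rewrite (filled_juliaE r_gt0 P_esc).
have -> : [set z | forall m, `|iter m (horner P) z| <= r] =
    \bigcap_(m in setT) iter m (horner P) @^-1` [set w | `|w| <= r].
  by apply/seteqP; split=> z /= z_bdd m; [move=> _|]; apply: z_bdd.
apply: closed_bigI => m _; apply: preimage_closed.
  by move=> z _; apply: continuous_iter; exact: continuous_horner_num.
exact/closed_normr_le/gtr0_real.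
Qed.

Lemma julia_subset_filled : julia P `<=` filled_julia P.
Proof. by move=> z [/closed_filled_julia]. Qed.

Lemma not_filled_julia_gt0 : (forall i, 0 <= P`_i) -> 1 < P`_1 ->
  forall x, 0 < x -> ~ filled_julia P x.
Proof.
move=> coef_ge0 P1_gt1 x x_gt0; have [r r_gt0 P_esc] := escape_radius size_P.
rewrite (filled_juliaE r_gt0 P_esc) => x_bdd.
have [m r_lt] := geometric_unbounded_complex (gtr0_real r_gt0) x_gt0 P1_gt1.
have P_ge_linear y : 0 < y -> P`_1 * y <= P.[y].
  by move=> y_gt0; exact: horner_ge_coef1 coef_ge0 (ltW y_gt0).
have := iter_ge_expr (lt_trans ltr01 P1_gt1) P_ge_linear m x x_gt0.
rewrite mulrC => orbit_ge; have r_lt_orbit := lt_le_trans r_lt orbit_ge.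
have := x_bdd m; rewrite gtr0_norm ?(lt_trans r_gt0 r_lt_orbit) //.
by move=> /(lt_le_trans r_lt_orbit); rewrite ltxx.
Qed.

Lemma filled_julia_conjc : (forall i, P`_i \is Num.real) ->
  forall z, filled_julia P z^* <-> filled_julia P z.
Proof.
move=> P_real z; rewrite /filled_julia /=.
by split=> -[M z_bdd]; exists M => n; move: (z_bdd n);
  rewrite iter_horner_conjc // normcJ.
Qed.

Lemma julia_conjc : (forall i, P`_i \is Num.real) ->
  forall z, julia P z^* <-> julia P z.
Proof.
move=> P_real.
apply: (boundary_involutive (@conjc R : CC R -> CC R) (filled_julia P)).
- exact: continuous_conjc.
- by move=> z; exact: (conjcK z).
- exact: filled_julia_conjc.
Qed.

Lemma julia0 : P`_0 = 0 -> (forall x, 0 < x -> ~ filled_julia P x) ->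
  julia P 0.
Proof.
move=> P0 pos_escape; split.
  apply: subset_closure; exists 0 => n.
  by rewrite iter_fix ?normr0 // horner_coef0.
move=> /nbhs_ballP[e e_gt0 ball_sub]; apply: (pos_escape (e / 2)).
  by rewrite divr_gt0.
apply: ball_sub; rewrite -ball_normE /= sub0r normrN gtr0_norm ?divr_gt0 //.
by rewrite ltr_pdivrMr // ltr_pMr // ltr1n.
Qed.

End FilledJulia.

Theorem lemma3p1 (R : realType) (P : {poly CC R}) :
  (3 <= size P)%N ->
  P`_0 = 0 ->
  (forall i : nat, (1 <= i < size P)%N -> 0 < P`_i) ->
  1 < (P^`()).[0] ->
  (forall z : CC R, julia P z <-> julia P z^*) /\
  julia P 0 /\
  (forall x : R, 0 < x -> ~ julia P (x%:C : CC R)).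
Proof.
move=> size_P P0 coef_gt0 dP0_gt1.
have P1_gt1 : 1 < P`_1 by move: dP0_gt1; rewrite horner_coef0 coef_deriv mulr1n.
have coef_ge0 i : 0 <= P`_i.
  case: i => [|i]; first by rewrite P0.
  have [i_lt|i_ge] := ltnP i.+1 (size P); first exact/ltW/coef_gt0.
  by rewrite nth_default.
have pos_escape := not_filled_julia_gt0 size_P coef_ge0 P1_gt1.
split; [|split].
- by move=> z; apply: iff_sym; apply: julia_conjc => i; exact: ger0_real.
- exact: julia0 P0 pos_escape.
- move=> x x_gt0 /(julia_subset_filled size_P); apply: pos_escape.
  by rewrite -[0]/(0%:C) ltcR.
Qed.
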